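(* Let $\Gamma^\infty$ be the infinite-horizon finite-action trading game described below, $m\ge1$, and $\epsilon\ge0$. If an assessment $(h^*,\mathscr B)\in\mathcal A(m)$ is an $\epsilon$-Perfect Bayesian equilibrium of the truncated game $\Gamma(m)$, then $(h^*,\mathscr B)$ is an $(\epsilon+w^m)$-Perfect Bayesian equilibrium of $\Gamma^\infty$.
   Context: $\Gamma^\infty$: finite state space $\Omega$, traders $I=\{1,\dots,n\}$ with partitions $\Pi_i$, security $X$, full-support common prior $\mu$, continuous strictly proper scoring rule $s$, $\beta\in(0,1)$, marginal cost $c>0$, cost function $K\ge0$; a finite set $\mathcal Y\subseteq[\min X,\max X]$ of announcements containing $y_0$ and a finite set $\mathcal E$ of signals with finitely many realizations. At $t_0$ nature draws $\omega^*\sim\mu$, the market maker announces $y_0$; at $t_k$ ($k\ge1$) trader $((k-1)\bmod n)+1$ privately picks a signal and, for each realization, an announcement in $\mathcal Y$; the realized announcement $y_k$ is public. The null action repeats the previous announcement and buys no signal. Payoff at $t_k$: $\beta^k(s(y_k,X(\omega^* ))-s(y_{k-1},X(\omega^* ))-cK(\mathcal R))$; payoffs summed over one's moves. An assessment $(\sigma,\mathscr B)$ consists of a behavior strategy profile and beliefs (over the full uncertainty) at every information set; it is consistent if beliefs follow from $\mu,\sigma$ by Bayes' rule whenever possible. $V_i(\mathcal I,\sigma,\mathscr B)$ denotes trader $i$'s continuation payoff at information set $\mathcal I$ under $\sigma$ with beliefs from $\mathscr B$. A consistent assessment $(\sigma^*,\mathscr B)$ is an $\epsilon$-Perfect Bayesian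 equilibrium if there is no information set $\mathcal I$ with mover $i$ and strategy $\sigma_i$ with $V_i(\mathcal I,(\sigma_i,\sigma^*_{-i}),\mathscr B)>V_i(\mathcal I,\sigma^*,\mathscr B)+\epsilon$ (deviations ranging over the strategies of the game in question). Truncated game $\Gamma(m)$: same as $\Gamma^\infty$ except that at all times $t_k$ with $k>m$ the only available action is the null action. $\Sigma(m)$ denotes its strategy profiles. $\mathcal A(m)$ is the set of assessments $(h,\mathscr B)$ with $h\in\Sigma(m)$ whose beliefs do not update after $t_m$ (if $k>m$ and $\mathcal I_{k-1}$ immediately precedes $\mathcal I_k$ then $\mathscr B(\mathcal I_k)=\mathscr B(\mathcal I_{k-1})$). Let $w^m=\sup_{\mathcal I,\mathscr B}\sup_{i,\ \sigma=_{m-1}\tau}|V_i(\mathcal I,\sigma,\mathscr B)-V_i(\mathcal I,\tau,\mathscr B)|$, where $\sigma=_{m-1}\tau$ means the profiles coincide at all information sets up to time $t_{m-1}$ and the supremum ranges over all information sets and all belief systems of $\Gamma^\infty$. *)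

From HB Require Import structures.
From mathcomp Require Import all_boot all_order all_algebra.
From mathcomp Require Import all_classical all_reals all_analysis.
Import Order.TTheory GRing.Theory Num.Theory.
Import numFieldNormedType.Exports.
Local Open Scope ring_scope.

Record market (R : realType) := Market {
  state : finType;
  ntraders : nat;                           (* n; traders are 'I_n (0-based) *)
  part : 'I_ntraders -> {set {set state}};
  sec : state -> R;
  prior : state -> R;
  score : R -> R -> R;
  disc : R;
  mcost : R;
  signal : finType;
  sigpart : signal -> {set {set state}};    (* a signal = a partition of Omega;
                                               its realizations are its cells *)
  cost : signal -> R;
  ann : finType;
  annval : ann -> R;
  ann0 : ann
}.

Arguments state {R}. Arguments ntraders {R}. Arguments part {R}. Arguments sec {R}.
Arguments prior {R}. Arguments score {R}. Arguments disc {R}. Arguments mcost {R}.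
Arguments signal {R}. Arguments sigpart {R}. Arguments cost {R}. Arguments ann {R}.
Arguments annval {R}. Arguments ann0 {R}.

Set Implicit Arguments. Unset Strict Implicit. Unset Printing Implicit Defensive.

Definition strictly_proper R (M : market R) : Prop :=
  forall q : state M -> R, (forall w, 0 <= q w) -> \sum_w q w = 1 ->
  forall y : R, y != \sum_w q w * sec M w ->
    \sum_w q w * score M y (sec M w)
      < \sum_w q w * score M (\sum_w' q w' * sec M w') (sec M w).

Definition market_axioms R (M : market R) : Prop :=
  (0 < ntraders M)%N /\
  (forall i, finset.partition (part M i) [set: state M]) /\
  (forall w, 0 < prior M w) /\ (\sum_w prior M w = 1) /\
  continuous (fun p : R * R => score M p.1 p.2) /\
  strictly_proper M /\
  (0 < disc M < 1) /\ (0 < mcost M) /\ (forall e, 0 <= cost M e) /\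
  (forall e, finset.partition (sigpart M e) [set: state M]) /\
  injective (annval M) /\
  (forall y, exists w1 w2, sec M w1 <= annval M y <= sec M w2).

Section Game.
Variables (R : realType) (M : market R).
Local Notation St := (state M).
Local Notation n := (ntraders M).

(* an action: a signal (None = buy no signal) and, for each realization
   (a cell of the signal's partition; setT when no signal), an announcement *)
Definition action := (option (signal M) * {ffun {set St} -> ann M})%type.
Definition hist := seq action.   (* actions a_1 .. a_k, chronological *)

Definition act0 : action := (None, [ffun=> ann0 M]).

Definition realization (a : action) (w : St) : {set St} :=
  if a.1 is Some e then finset.pblock (sigpart M e) w else [set: St].

Definition announce (a : action) (w : St) : ann M := a.2 (realization a w).

Definition last_ann (w : St) (h : hist) : ann M :=
  last (ann0 M) [seq announce a w | a <- h].

Definition null_act (w : St) (h : hist) : action := (None, [ffun=> last_ann w h]).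

(* a node (w, h) with size h = k-1 is where the decision at time t_k is taken;
   the mover is trader ((k-1) mod n)+1, i.e. index (size h) mod n (0-based) *)
Definition mover_is (i : 'I_n) (h : hist) : bool := (size h %% n == i)%N.

(* what trader i knows at node (w, h): own partition cell, the public
   announcements, and own past actions together with their realizations *)
Definition view (i : 'I_n) (w : St) (h : hist) :=
  (finset.pblock (part M i) w, [seq announce a w | a <- h],
   mkseq (fun j => if (j %% n == i)%N
                   then Some (nth act0 h j, realization (nth act0 h j) w)
                   else None) (size h)).

Definition same_info (w : St) (h : hist) (w' : St) (h' : hist) : bool :=
  (size h == size h')%N &&
  [forall i : 'I_n, mover_is i h ==> (view i w h == view i w' h')].

(* behavior strategy profiles: probability of action a at node (w, h) *)
Definition profile := St -> hist -> action -> R.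

Definition is_profile (sg : profile) : Prop :=
  (forall w h a, 0 <= sg w h a) /\ (forall w h, \sum_a sg w h a = 1) /\
  (forall w h w' h', same_info w h w' h' -> forall a, sg w h a = sg w' h' a).

(* Gamma^infty : all actions available at every time *)
Definition Gamma_inf : profile -> Prop := is_profile.

(* Gamma(m): at times t_k with k > m only the null action is available *)
Definition Gamma (m : nat) : profile -> Prop := fun sg =>
  is_profile sg /\ (forall w h, (m <= size h)%N -> sg w h (null_act w h) = 1).

(* trader i deviates to (the i-part of) tau *)
Definition mix (i : 'I_n) (tau sg : profile) : profile :=
  fun w h => if mover_is i h then tau w h else sg w h.

(* payoff of the mover at time t_k, k = size h + 1 *)
Definition stage (w : St) (h : hist) (a : action) : R :=
  disc M ^+ (size h).+1 *
    (score M (annval M (announce a w)) (sec M w)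
     - score M (annval M (last_ann w h)) (sec M w)
     - mcost M * (if a.1 is Some e then cost M e else 0)).

Fixpoint vT (T : nat) (i : 'I_n) (sg : profile) (w : St) (h : hist) : R :=
  if T is T'.+1 then
    \sum_a sg w h a * ((if mover_is i h then stage w h a else 0)
                       + vT T' i sg w (rcons h a))
  else 0.

Definition cont (i : 'I_n) (sg : profile) (w : St) (h : hist) : R :=
  limn (fun T => vT T i sg w h).

(* belief systems: B w h w' h' = probability assigned to node (w',h')
   at the information set containing node (w,h) *)
Definition beliefs := St -> hist -> St -> hist -> R.

Definition is_beliefs (B : beliefs) : Prop :=
  forall w h,
    (forall w' h', 0 <= B w h w' h') /\
    (forall w' h', ~~ same_info w h w' h' -> B w h w' h' = 0) /\
    (\sum_w' \sum_(t : (size h).-tuple action) B w h w' t = 1) /\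
    (forall w2 h2, same_info w h w2 h2 -> forall w' h', B w h w' h' = B w2 h2 w' h').

(* V_i(I, sg, B), I the information set of node (w,h) *)
Definition V (i : 'I_n) (w : St) (h : hist) (sg : profile) (B : beliefs) : R :=
  \sum_w' \sum_(t : (size h).-tuple action) B w h w' t * cont i sg w' t.

Definition pnode (sg : profile) (w : St) (h : hist) : R :=
  prior M w * \prod_(j < size h) sg w (take j h) (nth act0 h j).

Definition pinfo (sg : profile) (w : St) (h : hist) : R :=
  \sum_w' \sum_(t : (size h).-tuple action) (same_info w h w' t)%:R * pnode sg w' t.

Definition consistent (sg : profile) (B : beliefs) : Prop :=
  forall w h, 0 < pinfo sg w h ->
  forall w' (t : (size h).-tuple action),
    B w h w' t = (same_info w h w' t)%:R * pnode sg w' t / pinfo sg w h.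

Definition eps_PBE (G : profile -> Prop) (eps : R) (sg : profile) (B : beliefs) : Prop :=
  G sg /\ is_beliefs B /\ consistent sg B /\
  forall (i : 'I_n) w h, mover_is i h ->
  forall tau, G tau -> V i w h (mix i tau sg) B <= V i w h sg B + eps.

Definition null_ext (w : St) (h : hist) (k : nat) : hist :=
  iter k (fun h' => rcons h' (null_act w h')) h.

(* the class A(m): profiles of Gamma(m) with beliefs that do not update after
   t_m (belief of each trader at an information set after t_m equals his belief
   at his preceding information set after t_m, transported along the null moves) *)
Definition in_A (m : nat) (sg : profile) (B : beliefs) : Prop :=
  Gamma m sg /\ is_beliefs B /\
  forall w h, (m <= size h)%N -> forall w' h', size h' = size h ->
    B w (null_ext w h n) w' (null_ext w' h' n) = B w h w' h'.

Definition agree_upto (k : nat) (sg tau : profile) : Prop :=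
  forall w h, ((size h).+1 <= k)%N -> forall a, sg w h a = tau w h a.

Definition wm (m : nat) : R :=
  sup [set d : R | exists (i : 'I_n) w h sg tau B,
         [/\ is_profile sg, is_profile tau, agree_upto m.-1 sg tau, is_beliefs B &
             d = `|V i w h sg B - V i w h tau B|]]%classic.

End Game.

From HB Require Import structures.
From mathcomp Require Import all_boot all_order all_algebra.
From mathcomp Require Import all_classical all_reals all_analysis.
From mathcomp Require Import ring lra.
Import Order.TTheory GRing.Theory Num.Theory.
Import numFieldNormedType.Exports.
Local Open Scope ring_scope.

(* Replace a deviation tau of trader i in Gamma^infty by its truncation tau',
   which plays tau up to t_m and the null action afterwards.  tau' is a
   strategy of Gamma(m), so it gains at most eps over sg; and the profiles
   deviating to tau and to tau' agree up to t_(m-1), so their values differ by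
   at most w^m.  Stage payoffs are uniformly bounded and discounted by
   beta < 1, so all continuation values are bounded and w^m is a finite
   supremum. *)

Lemma norm_limn_le (R : realType) (u : nat -> R) (D : R) :
  0 <= D -> (forall T, `|u T| <= D) -> `|limn u| <= D.
Proof.
move=> D_ge0 uD; have [u_cvg|u_dvg] := pselect (cvg (u @ \oo)%classic); last first.
  by rewrite (dvgP u_dvg) normr0.
have u_between T : - D <= u T <= D by rewrite -ler_norml.
rewrite ler_norml; apply/andP; split.
- by apply: limr_ge => //; apply: nearW => T; case/andP: (u_between T).
- by apply: limr_le => //; apply: nearW => T; case/andP: (u_between T).
Qed.

Section Bounds.
Context {R : realType} {M : market R}.
Hypotheses (disc_ge0 : 0 <= disc M) (disc_lt1 : disc M < 1).

Definition stage_bound : R :=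
  (\sum_y \sum_w `|score M (annval M y) (sec M w)|) *+ 2
  + `|mcost M| * \sum_e `|cost M e|.

Definition value_bound : R := stage_bound * disc M / (1 - disc M).

Lemma norm_score_le_sum (y : ann M) (w : state M) :
  `|score M (annval M y) (sec M w)|
    <= \sum_y \sum_w `|score M (annval M y) (sec M w)|.
Proof.
rewrite (bigD1 y) //= (bigD1 w) //= -addrA lerDl.
by rewrite addr_ge0 ?sumr_ge0 // => *; rewrite sumr_ge0.
Qed.

Lemma stage_bound_ge0 : 0 <= stage_bound.
Proof.
by rewrite addr_ge0 ?mulr_ge0 ?mulrn_wge0 ?sumr_ge0 // => *; rewrite sumr_ge0.
Qed.

Lemma value_bound_ge0 : 0 <= value_bound.
Proof.
by rewrite divr_ge0 ?mulr_ge0 ?stage_bound_ge0 // subr_ge0 ltW.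
Qed.

Lemma norm_stage_le (w : state M) (h : hist M) (a : action M) :
  `|stage w h a| <= disc M ^+ (size h).+1 * stage_bound.
Proof.
rewrite /stage normrM normrX ger0_norm // ler_wpM2l ?exprn_ge0 //.
rewrite /stage_bound mulr2n.
apply: le_trans (ler_normB _ _) _; apply: lerD.
  by apply: le_trans (ler_normB _ _) _; apply: lerD; apply: norm_score_le_sum.
rewrite normrM ler_wpM2l //; case: a.1 => [e|]; last by rewrite normr0 sumr_ge0.
by rewrite (bigD1 e) //= lerDl sumr_ge0.
Qed.

Lemma norm_vT_le (i : 'I_(ntraders M)) (sg : profile M) (w : state M) :
  is_profile sg ->
  forall T h, `|vT T i sg w h| <= value_bound * disc M ^+ size h.
Proof.
move=> [sg_ge0 [sg_sum1 _]] T; elim: T => [|T IH] h /=.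
  by rewrite normr0 mulr_ge0 ?value_bound_ge0 ?exprn_ge0.
have value_bound_rec : (stage_bound + value_bound) * disc M = value_bound.
  have disc_neq1 : 1 - disc M != 0 by rewrite subr_eq0 eq_sym lt_eqF.
  by rewrite /value_bound; field.
have term_le a : `|(if mover_is i h then stage w h a else 0)
                   + vT T i sg w (rcons h a)|
                 <= (stage_bound + value_bound) * disc M * disc M ^+ size h.
  rewrite -mulrA -exprS mulrDl [stage_bound * _]mulrC.
  apply: le_trans (ler_normD _ _) _; apply: lerD.
    case: ifP => _; first exact: norm_stage_le.
    by rewrite normr0 mulr_ge0 ?exprn_ge0 ?stage_bound_ge0.
  by rewrite -(size_rcons h a); apply: IH.
apply: le_trans (ler_norm_sum _ _ _) _.
rewrite -value_bound_rec -[X in _ <= X]mul1r -(sg_sum1 w h) mulr_suml.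
by apply: ler_sum => a _; rewrite normrM ger0_norm // ler_wpM2l ?term_le.
Qed.

Lemma norm_V_le (i : 'I_(ntraders M)) (w : state M) (h : hist M)
    (sg : profile M) (B : beliefs M) :
  is_profile sg -> is_beliefs B -> `|V i w h sg B| <= value_bound.
Proof.
move=> sgP BP; have [B_ge0 [_ [B_sum1 _]]] := BP w h.
have cont_le w' t : `|cont i sg w' t| <= value_bound.
  apply: norm_limn_le value_bound_ge0 _ => T.
  apply: le_trans (norm_vT_le i sg w' sgP T t) _.
  by rewrite ler_piMr ?value_bound_ge0 ?exprn_ile1 ?(ltW disc_lt1).
apply: le_trans (ler_norm_sum _ _ _) _.
rewrite -[X in _ <= X]mul1r -B_sum1 mulr_suml.
apply: ler_sum => w' _; rewrite mulr_suml.
apply: le_trans (ler_norm_sum _ _ _) _.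
by apply: ler_sum => t _; rewrite normrM ger0_norm // ler_wpM2l ?cont_le.
Qed.

Lemma V_dist_le_wm (k : nat) (i : 'I_(ntraders M)) (w : state M) (h : hist M)
    (sg tau : profile M) (B : beliefs M) :
  is_profile sg -> is_profile tau -> agree_upto k.-1 sg tau -> is_beliefs B ->
  `|V i w h sg B - V i w h tau B| <= wm M k.
Proof.
move=> sgP tauP agree BP; apply: ub_le_sup; last by exists i, w, h, sg, tau, B.
exists (value_bound *+ 2) => _ [i' [w' [h' [sg' [tau' [B' [sgP' tauP' _ BP' ->]]]]]]].
apply: le_trans (ler_normB _ _) _; rewrite mulr2n.
by apply: lerD; apply: norm_V_le.
Qed.

End Bounds.

Section Deviations.
Context {R : realType} {M : market R}.

Definition truncate (m : nat) (tau : profile M) : profile M :=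
  fun w h a => if (size h < m)%N then tau w h a else (a == null_act w h)%:R.

Lemma is_profile_mix (i : 'I_(ntraders M)) (tau sg : profile M) :
  is_profile tau -> is_profile sg -> is_profile (mix i tau sg).
Proof.
move=> [tau_ge0 [tau_sum1 tau_info]] [sg_ge0 [sg_sum1 sg_info]].
split; first by move=> w h a; rewrite /mix; case: ifP.
split; first by move=> w h; rewrite /mix; case: ifP.
move=> w h w' h' info a; have /andP[/eqP size_eq _] := info.
by rewrite /mix /mover_is size_eq; case: ifP => _; [apply: tau_info|apply: sg_info].
Qed.

Lemma same_info_null_act (w : state M) (h : hist M) w' h' :
  (0 < ntraders M)%N -> same_info w h w' h' -> null_act w h = null_act w' h'.
Proof.
move=> n_gt0 /andP[_ /forallP views_eq].
have mover_lt : (size h %% ntraders M < ntraders M)%N by rewrite ltn_pmod.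
have := views_eq (Ordinal mover_lt); rewrite /mover_is eqxx /=.
by case/eqP=> _ anns_eq _; rewrite /null_act /last_ann anns_eq.
Qed.

Lemma Gamma_truncate (m : nat) (tau : profile M) :
  (0 < ntraders M)%N -> is_profile tau -> Gamma m (truncate m tau).
Proof.
move=> n_gt0 [tau_ge0 [tau_sum1 tau_info]].
split; last by move=> w h m_le; rewrite /truncate ltnNge m_le eqxx.
split; first by move=> w h a; rewrite /truncate; case: ifP.
split.
  move=> w h; rewrite /truncate; case: (ltnP (size h) m) => _; first exact: tau_sum1.
  by rewrite (bigD1 (null_act w h)) //= eqxx big1 ?addr0 // => a /negbTE ->.
move=> w h w' h' info a; have /andP[/eqP size_eq _] := info.
rewrite /truncate -size_eq; case: ifP => _; first exact: tau_info.
by rewrite (same_info_null_act _ _ _ _ n_gt0 info).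
Qed.

Lemma agree_upto_truncate (m : nat) (i : 'I_(ntraders M)) (tau sg : profile M) :
  agree_upto m.-1 (mix i tau sg) (mix i (truncate m tau) sg).
Proof.
move=> w h before a; rewrite /mix /truncate; case: ifP => // _.
by rewrite ifT // (leq_trans before) // leq_pred.
Qed.

End Deviations.

Theorem lemma1 (R : realType) (M : market R) (m : nat) (eps : R)
    (sg : profile M) (B : beliefs M) :
  market_axioms M -> (1 <= m)%N -> 0 <= eps ->
  in_A m sg B -> eps_PBE (Gamma m) eps sg B ->
  eps_PBE (@Gamma_inf R M) (eps + wm M m) sg B.
Proof.
move=> [n_gt0 [_ [_ [_ [_ [_ [/andP[disc_gt0 disc_lt1] _]]]]]]] _ _ _.
move=> [[sgP _] [BP [sg_consistent sg_eq]]].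
do 3 (split=> //); move=> i w h mover tau tauP.
have truncP := Gamma_truncate m tau n_gt0 tauP.
set V_tau := V i w h (mix i tau sg) B.
set V_trunc := V i w h (mix i (truncate m tau) sg) B.
have gain_trunc : V_trunc <= V i w h sg B + eps := sg_eq i w h mover _ truncP.
have dist_trunc : `|V_tau - V_trunc| <= wm M m.
  apply: (V_dist_le_wm (ltW disc_gt0) disc_lt1); last exact: BP.
  - exact: is_profile_mix.
  - by apply: is_profile_mix; case: truncP.
  - exact: agree_upto_truncate.
have := ler_norm (V_tau - V_trunc); lra.
Qed.
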